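(* Let $q$ be a prime power and let $\mathrm{Aff}(\mathbb{F}_q)$ be the affine group. Let $A\subseteq \mathrm{Aff}(\mathbb{F}_q)$ be a set and let $\Gamma\subseteq \mathrm{Aff}(\mathbb{F}_q)$ be a subgroup such that for every non-trivial multiplicative character $\chi$ of $\mathbb{F}_q^*$ there is $\gamma=(a,b)\in\Gamma$ with $\chi(a)\neq 1$. Let $z\in \mathrm{Aff}(\mathbb{F}_q)$ be arbitrary and let $n\ge 1$ be an integer such that $|A|^n|\Gamma|^2 > q^{n+2}(q-1)^2$. Then $A^n\cap z\Gamma\neq\emptyset$ and $A^n\cap \Gamma z\neq\emptyset$.
   Context: $\mathrm{Aff}(\mathbb{F}_q)$ is the group of matrices $\begin{pmatrix} a & b\\ 0 & 1\end{pmatrix}$ with $a\in\mathbb{F}_q^*=\mathbb{F}_q\setminus\{0\}$, $b\in\mathbb{F}_q$, under matrix multiplication; such an element is written $(a,b)$. For a set $A$ in a group, $A^n=\{a_1\cdots a_n : a_i\in A\}$, and $z\Gamma=\{z\gamma:\gamma\in\Gamma\}$, $\Gamma z=\{\gamma z:\gamma\in\Gamma\}$. *)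

From HB Require Import structures.
From mathcomp Require Import all_boot all_order all_algebra all_fingroup all_field.
Set Implicit Arguments. Unset Strict Implicit. Unset Printing Implicit Defensive.
Import GRing.Theory.

(* The affine group Aff(F_q), realised literally as the group of invertible
   2x2 matrices [[a, b], [0, 1]] inside GL_2(F).  The element (a, b) has
   a = g 0 0 (a nonzero) and b = g 0 1. *)
Definition Aff (F : finFieldType) : {set {'GL_ 2[F]}} :=
  [set g : {'GL_ 2[F]} | (GLval g 1%R 0%R == 0%R) && (GLval g 1%R 1%R == 1%R)].

Definition aff_a (F : finFieldType) (g : {'GL_ 2[F]}) : F := GLval g 0%R 0%R.

Fixpoint setpow (gT : finGroupType) (A : {set gT}) (n : nat) : {set gT} :=
  match n with
  | 0 => [set 1%g]
  | n'.+1 => (setpow A n' * A)%g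
  end.

Definition mult_char (F : finFieldType) (chi : {unit F} -> algC) : Prop :=
  chi 1%g = 1%R /\ forall u v : {unit F}, chi (u * v)%g = (chi u * chi v)%R.

Definition nontrivial_char (F : finFieldType) (chi : {unit F} -> algC) : Prop :=
  exists u : {unit F}, chi u <> 1%R.

From HB Require Import structures.
From mathcomp Require Import all_boot all_order all_algebra all_fingroup all_field all_character.
From mathcomp Require Import ring lra.
Set Implicit Arguments. Unset Strict Implicit. Unset Printing Implicit Defensive.
Import Order.TTheory GRing.Theory Num.Theory.
Local Open Scope ring_scope.

(* The character hypothesis forces the a-coordinates of Gamma to exhaust F^*: otherwise a
   linear character of the abelian group F^* that is trivial on them would violate it.
   If Gamma contains a non-trivial translation, its conjugates by elements of Gamma with
   arbitrary a-coordinate give every translation, so Gamma = Aff(F_q).  Otherwise a is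
   injective on Gamma, so |Gamma| <= q - 1 and the hypothesis yields |A|^n > q^(n+2);
   moreover Gamma is abelian, hence fixes a point x0, and having full a-image it is the
   whole stabiliser of x0.  Then g lies in z Gamma iff g x0 = z x0, so it suffices that A^n
   acts transitively on F_q.  The operator (T v)(x) = sum_(a in A) v(a x) satisfies
   |T v|^2 <= q |A| |v|^2 for mean-zero v, because two distinct affine maps agree in at most
   one point.  If no word of A^n sent x to y, then T^n (q 1_y - 1) would equal -|A|^n at x,
   whence |A|^(2n) <= (q |A|)^n (q^2 - q) and |A|^n < q^(n+2). *)

Lemma mulmx2E (R : pzSemiRingType) (M N : 'M[R]_2) i j :
  (M *m N) i j = M i 0 * N 0 j + M i 1 * N 1 j.
Proof.
rewrite mxE !big_ord_recl big_ord0 addr0.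
by have -> : lift ord0 ord0 = 1 :> 'I_2 by apply: val_inj.
Qed.

Lemma ord2P (i : 'I_2) : i = 0 \/ i = 1.
Proof. by case: i => [[|[|//]] Hi]; [left|right]; apply: val_inj. Qed.

Lemma cauchy_schwarz_sum (R : realDomainType) (I : finType) (a b : I -> R) :
  (\sum_i a i * b i) ^+ 2 <= (\sum_i a i ^+ 2) * (\sum_i b i ^+ 2).
Proof.
have lagrange : \sum_i \sum_j (a i * b j - a j * b i) ^+ 2 =
   \sum_i \sum_j (a i ^+ 2 * b j ^+ 2) + \sum_i \sum_j (b i ^+ 2 * a j ^+ 2)
   - (\sum_i \sum_j ((a i * b i) * (a j * b j))) *+ 2.
  rewrite -sumrMnl -big_split -sumrB; apply: eq_bigr => i _.
  rewrite -sumrMnl -big_split -sumrB; apply: eq_bigr => j _ /=; ring.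
have : 0 <= \sum_i \sum_j (a i * b j - a j * b i) ^+ 2.
  by apply: sumr_ge0 => i _; apply: sumr_ge0 => j _; apply: sqr_ge0.
rewrite lagrange -!big_distrlr /= -expr2 => ge0.
rewrite -subr_ge0; lra.
Qed.

Lemma sumr_bool_card (R : pzSemiRingType) (T : finType) (P : pred T) :
  \sum_x (P x)%:R = #|[set x | P x]|%:R :> R.
Proof. by rewrite -natr_sum -sum1dep_card [in RHS]big_mkcond. Qed.

Lemma setpow_sub (gT : finGroupType) (G : {group gT}) (A : {set gT}) n :
  A \subset G -> setpow A n \subset G.
Proof.
move=> sAG; elim: n => [|n IH] /=; first by rewrite sub1set group1.
apply/subsetP => _ /mulsgP[g a Gg Aa ->].
exact: groupM (subsetP IH _ Gg) (subsetP sAG _ Aa).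
Qed.

Lemma setpow_neq0 (gT : finGroupType) (A : {set gT}) n :
  A != set0 -> setpow A n != set0.
Proof.
case/set0Pn=> a Aa; elim: n => [|n /set0Pn[g Ag]] /=; apply/set0Pn.
  by exists 1%g; rewrite set11.
by exists (g * a)%g; apply: mem_mulg.
Qed.

Lemma lin_char_separates (gT : finGroupType) (G H : {group gT}) u :
  abelian G -> H \subset G -> u \notin H ->
  exists2 i : Iirr G, H \subset cfker 'chi_i & u \notin cfker 'chi_i.
Proof.
move=> abG sHG uH; have nHG : (H <| G)%g by rewrite -sub_abelian_normal.
apply/exists_inP; apply: contraNT uH; rewrite negb_exists_in => /forall_inP nosep.
by rewrite -(cap_cfker_normal nHG); apply/bigcapP => i /nosep/negPn.
Qed.

Section AffineGroup.
Variable F : finFieldType.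
Implicit Types (g h : {'GL_2[F]}) (x y : F).

Definition aff_b g : F := GLval g 0 1.

Definition aff_act g x : F := aff_a g * x + aff_b g.

Lemma Aff_eq g h : g \in Aff F -> h \in Aff F ->
  aff_a g = aff_a h -> aff_b g = aff_b h -> g = h.
Proof.
rewrite !inE => /andP[/eqP g10 /eqP g11] /andP[/eqP h10 /eqP h11] ea eb.
apply: val_inj; apply/matrixP => i j.
by case: (ord2P i) => ->; case: (ord2P j) => ->; rewrite ?g10 ?g11 ?h10 ?h11.
Qed.

Section Product.
Variables g h : {'GL_2[F]}.
Hypotheses (Hg : g \in Aff F) (Hh : h \in Aff F).

Lemma aff_aM : aff_a (g * h)%g = aff_a g * aff_a h.
Proof.
move: Hh; rewrite inE => /andP[/eqP h10 _].
by rewrite /aff_a GL_MxE mulmx2E h10 mulr0 addr0.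
Qed.

Lemma aff_bM : aff_b (g * h)%g = aff_a g * aff_b h + aff_b g.
Proof.
move: Hh; rewrite inE => /andP[_ /eqP h11].
by rewrite /aff_b GL_MxE mulmx2E h11 mulr1.
Qed.

Lemma Aff_mul : (g * h)%g \in Aff F.
Proof.
move: Hg Hh; rewrite !inE => /andP[/eqP g10 /eqP g11] /andP[/eqP h10 /eqP h11].
by rewrite !GL_MxE !mulmx2E g10 g11 h10 h11 !mul0r !mul1r !add0r !eqxx.
Qed.

End Product.

Lemma aff_a1 : aff_a (1%g : {'GL_2[F]}) = 1.
Proof. by rewrite /aff_a GL_1E mxE. Qed.

Lemma aff_b1 : aff_b 1%g = 0.
Proof. by rewrite /aff_b GL_1E mxE. Qed.

Lemma group_set_Aff : group_set (Aff F).
Proof.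
apply/group_setP; split; first by rewrite !inE GL_1E !mxE !eqxx.
exact: Aff_mul.
Qed.

Canonical Aff_group := Group group_set_Aff.

Lemma aff_a_neq0 g : g \in Aff F -> aff_a g != 0.
Proof.
move=> Hg; apply/eqP => a0; move/eqP: (oner_neq0 F); apply.
by rewrite -aff_a1 -(mulVg g) aff_aM ?groupV // a0 mulr0.
Qed.

Lemma aff_aV g : g \in Aff F -> aff_a (g^-1)%g = (aff_a g)^-1.
Proof.
move=> Hg; apply: (mulIf (aff_a_neq0 Hg)).
by rewrite -aff_aM ?groupV // mulVg aff_a1 mulVf ?aff_a_neq0.
Qed.

Lemma aff_act1 x : aff_act 1%g x = x.
Proof. by rewrite /aff_act aff_a1 aff_b1 mul1r addr0. Qed.

Lemma aff_actM g h x : g \in Aff F -> h \in Aff F ->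
  aff_act (g * h)%g x = aff_act g (aff_act h x).
Proof. by move=> Hg Hh; rewrite /aff_act aff_aM ?aff_bM //; ring. Qed.

Lemma aff_actK g : g \in Aff F -> cancel (aff_act g) (aff_act (g^-1)%g).
Proof. by move=> Hg x; rewrite -aff_actM ?groupV // mulVg aff_act1. Qed.

Lemma aff_act_inj g : g \in Aff F -> injective (aff_act g).
Proof. by move=> /aff_actK/can_inj. Qed.

Lemma Aff_eq_at g h x : g \in Aff F -> h \in Aff F ->
  aff_a g = aff_a h -> aff_act g x = aff_act h x -> g = h.
Proof. by move=> Hg Hh ea; rewrite /aff_act ea => /addrI; apply: Aff_eq. Qed.

Lemma Aff_eq_at2 g h x y : g \in Aff F -> h \in Aff F -> x != y ->
  aff_act g x = aff_act h x -> aff_act g y = aff_act h y -> g = h.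
Proof.
move=> Hg Hh xy ex ey; apply: (Aff_eq_at Hg Hh _ ex).
have : (aff_a g - aff_a h) * (x - y) = 0.
  have -> : (aff_a g - aff_a h) * (x - y) =
      (aff_act g x - aff_act h x) - (aff_act g y - aff_act h y).
    by rewrite /aff_act; ring.
  by rewrite ex ey !subrr.
by move/eqP; rewrite mulf_eq0 !subr_eq0 (negbTE xy) orbF => /eqP.
Qed.

Lemma card_aff_act_agree g h : g \in Aff F -> h \in Aff F -> g != h ->
  (#|[set x | aff_act g x == aff_act h x]| <= 1)%N.
Proof.
move=> Hg Hh gh; apply/card_le1_eqP => x y; rewrite !inE => /eqP ex /eqP ey.
by apply/eqP; apply: contraNT gh => yx; rewrite (Aff_eq_at2 Hg Hh yx ey ex).
Qed.

Definition Aff_transl : {set {'GL_2[F]}} := [set g in Aff F | aff_a g == 1].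

Definition Aff_stab x : {set {'GL_2[F]}} := [set g in Aff F | aff_act g x == x].

Lemma Aff_transl_eq1 t : t \in Aff_transl -> aff_b t = 0 -> t = 1%g.
Proof.
by rewrite inE => /andP[Ht /eqP a1] b0; apply: Aff_eq; rewrite ?group1 ?aff_a1 ?aff_b1.
Qed.

Lemma mulVg_Aff_transl g h : g \in Aff F -> h \in Aff F ->
  aff_a g = aff_a h -> (g^-1 * h)%g \in Aff_transl.
Proof.
move=> Hg Hh ea; rewrite inE groupM ?groupV //= aff_aM ?groupV // aff_aV // ea.
by rewrite mulVf ?aff_a_neq0.
Qed.

Lemma Aff_transl_conj d t r : d \in Aff F -> t \in Aff_transl -> r \in Aff_transl ->
  aff_b r = aff_a d * aff_b t -> r = (d * t * d^-1)%g.
Proof.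
move=> Hd /setIdP[Ht /eqP ta] /setIdP[Hr /eqP ra] eb.
apply: (canRL (mulgK d)) => /=; apply: Aff_eq; rewrite ?groupM //.
  by rewrite !aff_aM // ta ra mulr1 mul1r.
by rewrite !aff_bM // ra eb mul1r addrC.
Qed.

Section Subgroup.
Variable G : {group {'GL_2[F]}}.
Hypothesis sGAff : G \subset Aff F.

Section TranslationFree.
Hypothesis tfreeG : G :&: Aff_transl \subset [1]%g.

Lemma transl_free_inj : {in G &, injective (@aff_a F)}.
Proof.
move=> g h Gg Gh ea; apply/eqP; rewrite eq_mulVg1 -in_set1.
apply: (subsetP tfreeG); rewrite inE groupM ?groupV //.
exact: mulVg_Aff_transl (subsetP sGAff _ Gg) (subsetP sGAff _ Gh) ea.
Qed.

Lemma card_transl_free : (#|G| <= #|F|.-1)%N.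
Proof.
rewrite -(card_in_imset transl_free_inj) -(cardsC1 (0 : F)); apply: subset_leq_card.
by apply/subsetP => _ /imsetP[g Gg ->]; rewrite !inE aff_a_neq0 // (subsetP sGAff).
Qed.

Lemma transl_free_commute g h : g \in G -> h \in G -> commute g h.
Proof.
move=> Gg Gh; have [Hg Hh] := (subsetP sGAff _ Gg, subsetP sGAff _ Gh).
by apply: transl_free_inj; rewrite ?groupM // !aff_aM // mulrC.
Qed.

Lemma transl_free_fixed : exists x0, G \subset Aff_stab x0.
Proof.
have [/forall_inP a1 | ] := boolP [forall g in G, aff_a g == 1].
  exists 0; apply/subsetP => g Gg.
  have -> : g = 1%g.
    apply/set1P/(subsetP tfreeG); rewrite in_setI Gg.
    by apply/setIdP; rewrite a1 ?(subsetP sGAff _ Gg).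
  by apply/setIdP; rewrite group1 aff_act1.
rewrite negb_forall_in => /exists_inP[c Gc c1].
have Hc := subsetP sGAff _ Gc.
pose x0 := aff_b c / (1 - aff_a c).
have cx0 : aff_act c x0 = x0.
  by rewrite /aff_act /x0; field; rewrite subr_eq0 eq_sym.
exists x0; apply/subsetP => d Gd; have Hd := subsetP sGAff _ Gd.
apply/setIdP; split=> //; apply/eqP/eqP; apply: contraNT c1 => dx0.
apply/eqP; rewrite -aff_a1; congr aff_a.
apply: (Aff_eq_at2 Hc (group1 _) dx0); rewrite aff_act1 ?cx0 //.
by rewrite -aff_actM // (transl_free_commute Gc Gd) aff_actM // cx0.
Qed.

End TranslationFree.

Section Onto.
Hypothesis ontoG : [set~ 0] \subset [set aff_a g | g in G].

Lemma aff_a_onto c : c != 0 -> exists2 d, d \in G & aff_a d = c.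
Proof.
move=> c0; have /(subsetP ontoG)/imsetP[d Gd ->] : c \in [set~ 0] by rewrite !inE.
by exists d.
Qed.

Lemma Aff_sub_of_transl t : t \in G :&: Aff_transl -> t != 1%g -> Aff F \subset G.
Proof.
move=> /setIP[Gt Tt] t1; apply/subsetP => g Hg.
have [ga Gga ea] := aff_a_onto (aff_a_neq0 Hg).
have Hga := subsetP sGAff _ Gga.
rewrite -(mulKVg ga g) groupM //.
have Tr := mulVg_Aff_transl Hga Hg ea.
have [b0 | bn0] := eqVneq (aff_b (ga^-1 * g)%g) 0.
  by rewrite (Aff_transl_eq1 Tr b0) group1.
have bt0 : aff_b t != 0 by apply: contra t1 => /eqP/(Aff_transl_eq1 Tt) ->.
have [d Gd ed] := aff_a_onto (mulf_neq0 bn0 (invr_neq0 bt0)).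
by rewrite (Aff_transl_conj (subsetP sGAff _ Gd) Tt Tr) ?groupM ?groupV // ed divfK.
Qed.

Lemma Aff_stab_sub x0 : G \subset Aff_stab x0 -> Aff_stab x0 \subset G.
Proof.
move=> sGstab; apply/subsetP => g /setIdP[Hg /eqP gx0].
have [d Gd ea] := aff_a_onto (aff_a_neq0 Hg).
have /setIdP[Hd /eqP dx0] := subsetP sGstab _ Gd.
by rewrite (Aff_eq_at Hg Hd (esym ea) (etrans gx0 (esym dx0))).
Qed.

End Onto.

End Subgroup.
End AffineGroup.

Lemma units_abelian (F : finFieldType) : abelian [set: {unit F}].
Proof. by apply/centsP => u _ v _; apply: val_inj; rewrite /= mulrC. Qed.

Lemma lin_char_mult_char (F : finFieldType) (chi : 'CF([set: {unit F}])) :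
  chi \is a linear_char -> mult_char chi.
Proof. by move=> lin; split=> [|u v]; rewrite ?lin_char1 // lin_charM ?inE. Qed.

Lemma aff_a_onto_of_chars (F : finFieldType) (G : {group {'GL_2[F]}}) :
  G \subset Aff F ->
  (forall chi : {unit F} -> algC, mult_char chi -> nontrivial_char chi ->
     exists2 g, g \in G & exists u : {unit F}, val u = aff_a g /\ chi u <> 1) ->
  [set~ 0] \subset [set aff_a g | g in G].
Proof.
move=> sGAff sepG; pose H := [set u : {unit F} | val u \in [set aff_a g | g in G]].
have gH : group_set H.
  apply/group_setP; split; first by rewrite !inE; apply/imsetP; exists 1%g; rewrite ?aff_a1.
  move=> u v; rewrite !inE => /imsetP[g Gg eu] /imsetP[h Gh ev].
  by apply/imsetP; exists (g * h)%g; rewrite ?groupM // aff_aM ?(subsetP sGAff) // -eu -ev.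
apply/subsetP => c; rewrite !inE => c0.
pose u : {unit F} := Sub c (etrans (unitfE c) c0).
have [|uH] := boolP (u \in Group gH); first by rewrite inE; apply.
have [i sHker uker] := lin_char_separates (units_abelian F) (subsetT (Group gH)) uH.
have lin_i : 'chi_i \is a linear_char by apply/char_abelianP/units_abelian.
have [|g Gg [v [ev chiv]]] := sepG _ (lin_char_mult_char lin_i).
  by exists u => chiu; move: uker; rewrite cfkerEirr !inE chiu lin_char1 ?eqxx.
have /(subsetP sHker) : v \in H by rewrite inE ev imset_f.
by rewrite cfkerEirr inE lin_char1 // => /eqP.
Qed.

Section Spreading.
Variables (F : finFieldType) (A : {set {'GL_2[F]}}).
Hypothesis sAAff : A \subset Aff F.

Local Notation q := (#|F|%:R : rat).
Local Notation k := (#|A|%:R : rat).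

Definition sum_act (v : F -> rat) (x : F) : rat := \sum_(a in A) v (aff_act a x).

Definition hits (x t : F) : rat := \sum_(a in A) (aff_act a x == t)%:R.

Lemma setpow_Aff n : setpow A n \subset Aff F.
Proof. exact: (@setpow_sub _ (Aff_group F)). Qed.

Lemma iter_sum_act_neq0 n v x : iter n sum_act v x != 0 ->
  exists2 g, g \in setpow A n & v (aff_act g x) != 0.
Proof.
elim: n x => [|n IH] x /=; first by exists 1%g; rewrite ?set11 ?aff_act1.
move=> nz; have /exists_inP[a Aa /IH[g Ag vg]] :
    [exists a in A, iter n sum_act v (aff_act a x) != 0].
  apply: contraNT nz; rewrite negb_exists_in => /forall_inP z.
  by apply/eqP/big1 => a /z/negPn/eqP.
exists (g * a)%g; first exact: mem_mulg.
by rewrite aff_actM //; [exact: (subsetP (setpow_Aff n)) | exact: (subsetP sAAff)].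
Qed.

Lemma iter_sum_act_affine n (c d : rat) v x :
  iter n sum_act (fun t => c * v t - d) x = c * iter n sum_act v x - d * k ^+ n.
Proof.
elim: n x => [|n IH] x /=; first by rewrite expr0 mulr1.
rewrite /sum_act (eq_bigr _ (fun a _ => IH _)) sumrB -mulr_sumr sumr_const exprSr.
by rewrite mulrA mulr_natr.
Qed.

Lemma sum_sum_act v : \sum_x sum_act v x = k * \sum_x v x.
Proof.
rewrite /sum_act exchange_big /= mulr_natl -sumr_const; apply: eq_bigr => a Aa.
by rewrite [RHS](reindex_inj (aff_act_inj (subsetP sAAff a Aa))).
Qed.

Lemma sum_act_hits v x : sum_act v x = \sum_t hits x t * v t.
Proof.
under eq_bigr => t _ do rewrite mulr_suml.
rewrite exchange_big /=; apply: eq_bigr => a _.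
rewrite (bigD1 (aff_act a x)) //= eqxx mul1r big1 ?addr0 // => t.
by rewrite eq_sym => /negbTE ->; rewrite mul0r.
Qed.

Lemma sum_hits x : \sum_t hits x t = k.
Proof.
have := sum_act_hits (fun _ => 1) x; rewrite /sum_act sumr_const => ->.
by under [RHS]eq_bigr do rewrite mulr1.
Qed.

Lemma sum_hits_sq_le : \sum_x \sum_t hits x t ^+ 2 <= q * k + k ^+ 2.
Proof.
have sq x : \sum_t hits x t ^+ 2 =
    \sum_(a in A) \sum_(b in A) (aff_act b x == aff_act a x)%:R.
  rewrite -[RHS]/(sum_act (hits x) x) sum_act_hits.
  by apply: eq_bigr => t _; rewrite expr2.
have agree a b : a \in A -> b \in A ->
    \sum_x (aff_act b x == aff_act a x)%:R <= (b == a)%:R * q + 1.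
  move=> Aa Ab; have [-> | ba] := eqVneq b a.
    by under eq_bigr do rewrite eqxx; rewrite sumr_const mul1r lerDl.
  rewrite sumr_bool_card mul0r add0r lern1.
  exact: card_aff_act_agree (subsetP sAAff _ Ab) (subsetP sAAff _ Aa) ba.
under eq_bigr do rewrite sq.
rewrite exchange_big /=; under eq_bigr => a _ do rewrite exchange_big /=.
apply: le_trans (ler_sum _ (fun a Aa => ler_sum _ (fun b Ab => agree a b Aa Ab))) _.
have row a : a \in A -> \sum_(b in A) ((b == a)%:R * q + 1) = q + k.
  move=> Aa; rewrite big_split /= sumr_const -mulr_suml (bigD1 a) //= eqxx.
  by rewrite big1 ?addr0 ?mul1r // => b /andP[_ /negbTE ->].
by rewrite (eq_bigr _ row) sumr_const -[X in X <= _]mulr_natr mulrDl expr2.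
Qed.

Lemma sum_act_sq_le v : \sum_t v t = 0 ->
  \sum_x sum_act v x ^+ 2 <= q * k * \sum_x v x ^+ 2.
Proof.
move=> v0; have q0 : q != 0 by rewrite pnatr_eq0 -lt0n; apply/card_gt0P; exists 0.
have centered x : sum_act v x = \sum_t (hits x t - k / q) * v t.
  under [RHS]eq_bigr do rewrite mulrBl.
  by rewrite sumrB -mulr_sumr v0 mulr0 subr0 sum_act_hits.
have var : \sum_x \sum_t (hits x t - k / q) ^+ 2 = \sum_x \sum_t hits x t ^+ 2 - k ^+ 2.
  transitivity (\sum_x (\sum_t hits x t ^+ 2 - k ^+ 2 / q)).
    apply: eq_bigr => x _; under eq_bigr do rewrite sqrrB.
    rewrite !big_split /= sumrN sumrMnl -mulr_suml sum_hits sumr_const; by field.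
  by rewrite sumrB sumr_const; field.
have cs x : sum_act v x ^+ 2 <= (\sum_t (hits x t - k / q) ^+ 2) * \sum_t v t ^+ 2.
  by rewrite centered; exact: cauchy_schwarz_sum.
apply: le_trans (ler_sum _ (fun x _ => cs x)) _.
rewrite -mulr_suml var ler_wpM2r ?sumr_ge0 // => [t _|]; first exact: sqr_ge0.
by have := sum_hits_sq_le; lra.
Qed.

Lemma iter_sum_act_sq_le n w : \sum_t w t = 0 ->
  \sum_x iter n sum_act w x ^+ 2 <= (q * k) ^+ n * \sum_x w x ^+ 2.
Proof.
move=> w0; have mean0 m : \sum_t iter m sum_act w t = 0.
  by elim: m => [|m IH] //=; rewrite sum_sum_act IH mulr0.
elim: n => [|n IH] /=; first by rewrite expr0 mul1r.
apply: le_trans (sum_act_sq_le (mean0 n)) _.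
by rewrite exprS -[leRHS]mulrA; apply: ler_wpM2l; rewrite ?mulr_ge0 ?ler0n.
Qed.

Lemma setpow_transitive n x y : (#|F| ^ (n + 2) < #|A| ^ n)%N ->
  exists2 g, g \in setpow A n & aff_act g x = y.
Proof.
move=> big; pose d t : rat := (t == y)%:R.
have [/iter_sum_act_neq0[g Ag] | /negPn/eqP d0] := boolP (iter n sum_act d x != 0).
  by rewrite pnatr_eq0 eqb0 negbK => /eqP; exists g.
exfalso; pose w t := q * d t - 1.
have d1 : \sum_t d t = 1.
  by rewrite (bigD1 y) //= /d eqxx big1 ?addr0 // => t /negbTE ->.
have w0 : \sum_t w t = 0 by rewrite sumrB -mulr_sumr d1 mulr1 sumr_const subrr.
have w2 : \sum_t w t ^+ 2 = q ^+ 2 - q.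
  transitivity (\sum_t ((q ^+ 2 - q *+ 2) * d t + 1)).
    by apply: eq_bigr => t _; rewrite /w /d; case: (t == y) => /=; ring.
  by rewrite big_split /= -mulr_sumr d1 sumr_const; ring.
have wx : iter n sum_act w x = - k ^+ n by rewrite iter_sum_act_affine d0; ring.
have single : iter n sum_act w x ^+ 2 <= \sum_x' iter n sum_act w x' ^+ 2.
  by rewrite (bigD1 x) //= lerDl sumr_ge0 // => t _; apply: sqr_ge0.
have := le_trans single (iter_sum_act_sq_le n w0).
rewrite wx sqrrN w2 exprMn.
move: big; rewrite -(ltr_nat rat) !natrX exprD.
set K := k ^+ n; set Q := q ^+ n => big le_sq.
have Q0 : 0 <= Q by rewrite exprn_ge0.
have K0 : 0 < K := le_lt_trans (mulr_ge0 Q0 (sqr_ge0 q)) big.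
have : K ^+ 2 < K ^+ 2.
  apply: (le_lt_trans le_sq); apply: (@le_lt_trans _ _ (K * (Q * q ^+ 2))).
    rewrite -subr_ge0 (_ : _ - _ = Q * K * q); last by ring.
    by rewrite mulr_ge0 ?ler0n // mulr_ge0 // ltW.
  by rewrite expr2 ltr_pM2l.
by rewrite ltxx.
Qed.
End Spreading.

Lemma meets_cosets_of_Aff_sub (F : finFieldType) (B : {set {'GL_2[F]}})
    (G : {group {'GL_2[F]}}) z :
  B \subset Aff F -> B != set0 -> Aff F \subset G -> z \in Aff F ->
  (B :&: (z *: G)%g != set0) /\ (B :&: (G :* z)%g != set0).
Proof.
move=> sBAff /set0Pn[g Bg] sAffG Hz; have Hg := subsetP sBAff _ Bg.
by split; apply/set0Pn; exists g;
  rewrite inE Bg ?mem_lcoset ?mem_rcoset (subsetP sAffG) // groupM ?groupV.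
Qed.

Lemma meets_cosets_of_stab_sub (F : finFieldType) (B : {set {'GL_2[F]}})
    (G : {group {'GL_2[F]}}) z x0 :
  B \subset Aff F -> (forall x y, exists2 g, g \in B & aff_act g x = y) ->
  Aff_stab x0 \subset G -> z \in Aff F ->
  (B :&: (z *: G)%g != set0) /\ (B :&: (G :* z)%g != set0).
Proof.
move=> sBAff transB sstabG Hz; have HzV := groupVr Hz.
split; apply/set0Pn.
  have [g Bg gx0] := transB x0 (aff_act z x0); have Hg := subsetP sBAff _ Bg.
  exists g; rewrite inE Bg mem_lcoset (subsetP sstabG) // inE groupM //=.
  by rewrite aff_actM // gx0 aff_actK.
have [g Bg gx0] := transB (aff_act z^-1 x0) x0; have Hg := subsetP sBAff _ Bg.
exists g; rewrite inE Bg mem_rcoset (subsetP sstabG) // inE groupM //=.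
by rewrite aff_actM // gx0.
Qed.

Theorem corollary7 (F : finFieldType) (A : {set {'GL_ 2[F]}})
  (Gamma : {group {'GL_ 2[F]}}) (z : {'GL_ 2[F]}) (n : nat) :
  A \subset Aff F ->
  Gamma \subset Aff F ->
  (forall chi : {unit F} -> algC, mult_char chi -> nontrivial_char chi ->
     exists2 g, g \in Gamma &
       exists u : {unit F}, val u = aff_a g /\ chi u <> 1%R) ->
  z \in Aff F ->
  (1 <= n)%N ->
  (#|A| ^ n * #|Gamma| ^ 2 > #|F| ^ (n + 2) * (#|F| - 1) ^ 2)%N ->
  (setpow A n :&: (z *: Gamma)%g != set0) /\ (setpow A n :&: (Gamma :* z)%g != set0).
Proof.
move=> sAAff sGAff sepG Hz n_gt0 big.
have ontoG := aff_a_onto_of_chars sGAff sepG.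
have [tfreeG | /subsetPn[t GTt t1]] := boolP (Gamma :&: Aff_transl F \subset [1]%g).
  have [x0 sGstab] := transl_free_fixed sGAff tfreeG.
  apply: meets_cosets_of_stab_sub (setpow_Aff sAAff n) _ (Aff_stab_sub ontoG sGstab) Hz.
  move=> x y; apply: setpow_transitive => //; rewrite ltnNge; apply: contraTN big.
  move=> le_pow; rewrite -leqNgt leq_mul // leq_sqr subn1.
  exact: card_transl_free sGAff tfreeG.
apply: meets_cosets_of_Aff_sub (setpow_Aff sAAff n) _ _ Hz.
  apply: setpow_neq0; apply: contraTneq big => ->.
  by rewrite cards0 exp0n.
by apply: (Aff_sub_of_transl sGAff ontoG GTt); rewrite in_set1 in t1.
Qed.
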